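(* Let $A, A_1,\dots,A_k$ ($k\ge2$) be nonempty subsets of $X$ (or of $X^*$). Then \[ \Big[\overline{\operatorname{co}}\big(A\cup A_1\cup\cdots\cup A_k\big)\Big]_\infty=\Big[\overline{\operatorname{co}}\big(A\cup(A_1+\cdots+A_k)\big)\Big]_\infty . \]
   Context: $X$ is a real separated locally convex space with dual $X^*$ carrying the weak$^*$ topology (closures in $X^*$ are weak$^*$-closures). $\overline{\operatorname{co}}$ denotes the closed convex hull, and $A_1+\cdots+A_k$ the Minkowski sum. For a nonempty closed convex set $C$, its recession cone is $C_\infty:=\{y:\ z+\lambda y\in C\text{ for some } z\in C \text{ and all }\lambda\ge 0\}$. *)

From HB Require Import structures.
From mathcomp Require Import all_boot all_order all_algebra.
From mathcomp Require Import all_classical all_reals all_analysis.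
Set Implicit Arguments. Unset Strict Implicit. Unset Printing Implicit Defensive.
Import Order.TTheory GRing.Theory Num.Theory.
Local Open Scope classical_set_scope.
Local Open Scope ring_scope.

Definition conv_hull (R : realType) (E : tvsType R) (A : set E) : set E :=
  [set x | forall C : set E, convex_set C -> A `<=` C -> C x].

Definition clconv (R : realType) (E : tvsType R) (A : set E) : set E :=
  closure (conv_hull A).

Definition recession_cone (R : realType) (E : tvsType R) (C : set E) : set E :=
  [set y | exists2 z, C z & forall l : R, 0 <= l -> C (z + l *: y)].

Definition minkowski_sum (R : realType) (E : tvsType R) (k : nat)
    (A : 'I_k -> set E) : set E :=
  [set x | exists a : 'I_k -> E, (forall i, A i (a i)) /\ x = \sum_(i < k) a i].

From HB Require Import structures.
From mathcomp Require Import all_boot all_order all_algebra.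
From mathcomp Require Import all_classical all_reals all_analysis.
From mathcomp Require Import ring lra.
Import Order.TTheory GRing.Theory Num.Theory.
Local Open Scope classical_set_scope.
Local Open Scope ring_scope.

(* The recession cone of a closed convex hull only sees the "behaviour at
   infinity" of the generating set, so it is unchanged by bounded
   perturbations.  Call a set K bounded
   when every neighbourhood of 0 absorbs all small nonnegative multiples of K,
   and write [perturb D mu K] for the set of x such that mu x + c lies in D
   for some c in K.  The key lemma [recession_closure_perturb] states that if
   C is contained in [perturb D mu K] with D convex and nonempty, mu > 0 and K
   bounded, then rec(cl C) is contained in rec(cl D).  Since [perturb D mu K]
   is convex whenever D and K are, it suffices to check that the generators
   of one hull lie in a perturbation of the other hull.  Fixing p in A and
   p_i in A_i, with s = p_1 + ... + p_k:
   - a point of A_i lies in co(A u (A_1+...+A_k)) up to the shift s - p_i,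
     a vertex of the zonotope spanned by the vectors s - p_j;
   - for a point x of A (resp. of A_1+...+A_k), x/k lies in the other hull up
     to a point of the segment [0, p] (resp. exactly, as an average of points
     of the A_i).
   Zonotopes are convex and bounded, which gives both inclusions. *)

Section ConvexSets.
Context (R : realType) (M : lmodType R).

Lemma convex_comb (C : set M) x y t : convex_set C -> C x -> C y ->
  0 <= t -> t <= 1 -> C (t *: x + (1 - t) *: y).
Proof.
move=> cC Cx Cy t0 t1.
by have := cC x y (Itv01 t0 t1); rewrite !inE => /(_ Cx Cy).
Qed.

Lemma convex_setP (C : set M) :
  (forall x y t, 0 <= t -> t <= 1 -> C x -> C y -> C (t *: x + (1 - t) *: y)) ->
  convex_set C.
Proof.
move=> H x y l; rewrite !inE => Cx Cy.
exact: (H x y l%:num (ge0 l) (le1 l) Cx Cy).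
Qed.

Lemma convex_mean (D : set M) k (a : 'I_k -> M) : (0 < k)%N -> convex_set D ->
  (forall i, D (a i)) -> D ((k%:R)^-1 *: \sum_(i < k) a i).
Proof.
case: k a => // n a _ cD; elim: n a => [|n IH] a Da.
  by rewrite big_ord1 invr1 scale1r.
have n1 : (n.+1%:R : R) != 0 by rewrite pnatr_eq0.
have n2 : (n.+2%:R : R) != 0 by rewrite pnatr_eq0.
have := @convex_comb D _ _ (n.+1%:R / n.+2%:R) cD
  (IH (fun i => a (widen_ord (leqnSn n.+1) i)) (fun i => Da _)) (Da ord_max).
rewrite scalerA.
have -> : n.+1%:R / n.+2%:R * (n.+1%:R)^-1 = (n.+2%:R : R)^-1.
  by rewrite mulrAC divff // mul1r.
have -> : 1 - n.+1%:R / n.+2%:R = (n.+2%:R : R)^-1.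
  by move: n2; rewrite -natr1 => n2; field.
rewrite -scalerDr -big_ord_recr; apply.
- by rewrite divr_ge0.
- by rewrite ler_pdivrMr ?ltr0n // mul1r ler_nat.
Qed.

Definition zonotope {m} (f : 'I_m -> M) : set M :=
  [set c | exists2 a : 'I_m -> R, (forall i, 0 <= a i <= 1) &
                                  c = \sum_(i < m) a i *: f i].

Lemma zonotope0 m (f : 'I_m -> M) : zonotope f 0.
Proof.
exists (fun=> 0); first by move=> _; rewrite lexx ler01.
by rewrite big1 // => i _; rewrite scale0r.
Qed.

Lemma zonotope_convex m (f : 'I_m -> M) : convex_set (zonotope f).
Proof.
apply: convex_setP => x y t t0 t1 [a1 a1b ->] [a2 a2b ->].
exists (fun i => t * a1 i + (1 - t) * a2 i).
  move=> i; have /andP [h1 h2] := a1b i; have /andP [h3 h4] := a2b i.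
  by apply/andP; split; nra.
rewrite !scaler_sumr -big_split /=; apply: eq_bigr => i _.
by rewrite [RHS]scalerDl !scalerA.
Qed.

Definition perturb (D : set M) (mu : R) (K : set M) : set M :=
  [set x | exists2 c, K c & D (mu *: x + c)].

Lemma perturb_convex (D K : set M) mu : convex_set D -> convex_set K ->
  convex_set (perturb D mu K).
Proof.
move=> cD cK; apply: convex_setP => x y t t0 t1 [cx Kcx Dx] [cy Kcy Dy].
exists (t *: cx + (1 - t) *: cy); first exact: convex_comb.
have -> : mu *: (t *: x + (1 - t) *: y) + (t *: cx + (1 - t) *: cy) =
    t *: (mu *: x + cx) + (1 - t) *: (mu *: y + cy).
  rewrite !scalerDr !scalerA [mu * t]mulrC [mu * (1 - t)]mulrC.
  by rewrite !addrA [LHS](ACl (1*3*2*4)%AC).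
exact: convex_comb.
Qed.

End ConvexSets.
Arguments zonotope {R M m}.
Arguments perturb {R M}.

Section ConvexHull.
Context (R : realType) (E : tvsType R).

Lemma conv_hull_convex (A : set E) : convex_set (conv_hull A).
Proof.
move=> x y l; rewrite !inE => Hx Hy C cC AC.
by have := cC x y l; rewrite !inE; apply; [exact: Hx | exact: Hy].
Qed.

Lemma sub_conv_hull (A : set E) : A `<=` conv_hull A.
Proof. by move=> x Ax C _; apply. Qed.

Lemma conv_hull_min (A C : set E) : convex_set C -> A `<=` C -> conv_hull A `<=` C.
Proof. by move=> cC AC x; apply. Qed.

End ConvexHull.

Section BoundedPerturbation.
Context (R : realType) (E : tvsType R).

Definition tvs_bounded (K : set E) : Prop :=
  forall U, nbhs 0 U -> exists2 d : R, 0 < d &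
    forall t c, 0 <= t -> t < d -> K c -> U (t *: c).

Lemma nbhs0_split (U : set E) : nbhs 0 U ->
  exists2 V : set E, nbhs 0 V & forall a b, V a -> V b -> U (a + b).
Proof.
move=> U0; have /= := @add_continuous E (0, 0) U.
rewrite addr0 => /(_ U0) [] /= [B1 B2] [/= B10 B20] BU.
exists (B1 `&` B2); first exact: filterI.
by move=> a b [Ha _] [_ Hb]; apply: (BU (a, b)).
Qed.

Lemma nbhs0_scale_small (v : E) (U : set E) : nbhs 0 U ->
  exists2 d : R, 0 < d & forall t : R, `|t| < d -> U (t *: v).
Proof.
move=> U0; have /= := @scale_continuous R E (0, v) U.
rewrite scale0r => /(_ U0) [] /= [B1 B2] [/= B10 B20] BU.
move: B10 => /nbhs_ballP [d /= d0 Hd].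
exists d => // t td; apply: (BU (t, v)); split => //=; last exact: nbhs_singleton.
by apply: Hd; rewrite /ball /= sub0r normrN.
Qed.

Lemma nbhs_shift0 (q : E) (N : set E) : nbhs q N -> nbhs 0 [set u | N (q + u)].
Proof.
move=> Nq; have /= := @add_continuous E (q, 0) N.
rewrite addr0 => /(_ Nq) [] /= [B1 B2] [/= B10 B20] BU.
apply: filterS B20 => u Bu; apply: (BU (q, u)); split => //=.
exact: nbhs_singleton.
Qed.

Lemma zonotope_bounded m (f : 'I_m -> E) : tvs_bounded (zonotope f).
Proof.
elim: m f => [|m IH] f U U0.
  exists 1 => // t c _ _ [a _ ->]; rewrite big_ord0 scaler0.
  exact: nbhs_singleton.
have [V V0 VU] := nbhs0_split _ U0.
have [d1 d10 H1] := IH (fun i => f (widen_ord (leqnSn m) i)) V V0.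
have [d2 d20 H2] := nbhs0_scale_small (f ord_max) _ V0.
exists (Num.min d1 d2); first by rewrite lt_min d10 d20.
move=> t c t0; rewrite lt_min => /andP [td1 td2] [a a01 ->].
rewrite big_ord_recr /= scalerDr scalerA; apply: VU.
  by apply: H1 => //; exists (fun i => a (widen_ord (leqnSn m) i)).
apply: H2; have /andP [a0 a1] := a01 ord_max.
rewrite normrM !ger0_norm //; apply: le_lt_trans td2.
by rewrite -[leRHS]mulr1 ler_wpM2l.
Qed.

Lemma nbhs_perturbation (K : set E) (q v0 : E) (N : set E) :
  tvs_bounded K -> nbhs q N ->
  exists t : R, [/\ 0 < t, t <= 1 & exists2 V : set E, nbhs 0 V &
    forall v c, V v -> K c -> N (q + (t *: v0 + v + t *: c))].
Proof.
move=> bK /nbhs_shift0 N0.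
have [V1 V10 V1N] := nbhs0_split _ N0.
have [V V0 VV1] := nbhs0_split _ V10.
have [d1 d10 H1] := bK _ V10.
have [d2 d20 H2] := nbhs0_scale_small v0 _ V0.
pose t := Num.min (Num.min d1 d2) 1 / 2.
have t0 : 0 < t by rewrite divr_gt0 // !lt_min d10 d20 ltr01.
have : t < Num.min (Num.min d1 d2) 1.
  by rewrite /t ltr_pdivrMr // ltr_pMr ?ltr1n // !lt_min d10 d20 ltr01.
rewrite !lt_min => /andP [/andP [td1 td2] t1].
exists t; split => //; first exact: ltW.
exists V => // v c Vv Kc; apply: V1N; last exact: H1 (ltW t0) td1 Kc.
by apply: VV1 => //; apply: H2; rewrite gtr0_norm.
Qed.

Lemma recession_closure_perturb (C D K : set E) (p : E) (mu : R) :
  convex_set D -> D p -> 0 < mu -> tvs_bounded K -> C `<=` perturb D mu K ->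
  recession_cone (closure C) `<=` recession_cone (closure D).
Proof.
move=> cD Dp mu0 bK CD y [z Cz Hz]; exists p; first exact: subset_closure.
move=> l l0 N Nq.
have [t [t0 t1 [V V0 NV]]] := nbhs_perturbation _ _ (mu *: z - p) _ bK Nq.
have tmu0 : t * mu != 0 by rewrite mulf_neq0 // gt_eqF.
pose w := z + (l / (t * mu)) *: y.
have Cw : closure C w by apply: Hz; rewrite divr_ge0 // mulr_ge0 // ltW.
have Ww : nbhs w (+%R w @` ( *:%R (t * mu)^-1 @` V)).
  by apply: nbhsT; apply: nbhs0Z => //; rewrite invr_eq0.
have [x [Cx [_ [v Vv <-] xE]]] := Cw _ Ww.
have [c Kc Dc] := CD _ Cx; rewrite -xE in Dc.
exists (t *: (mu *: (w + (t * mu)^-1 *: v) + c) + (1 - t) *: p); split.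
  exact: convex_comb (ltW t0) t1.
have -> : t *: (mu *: (w + (t * mu)^-1 *: v) + c) + (1 - t) *: p =
    p + l *: y + (t *: (mu *: z - p) + v + t *: c).
  rewrite /w !scalerDr !scalerA scalerN divff // scale1r.
  rewrite [t * mu * _]mulrC divfK // scalerBl scale1r.
  by rewrite !addrA [LHS](ACl (5*2*1*6*3*4)%AC).
exact: NV.
Qed.

End BoundedPerturbation.

Section RecessionOfHulls.
Context (R : realType) (E : tvsType R).

(* Replacing A_1, ..., A_k by their Minkowski sum can only enlarge the
   recession cone: a point x of A_i equals, up to the shift s - p_i, the point
   x + (s - p_i) of A_1 + ... + A_k. *)
Lemma recession_union_sub_sum k (A : set E) (As : 'I_k -> set E) (p : E)
    (ps : 'I_k -> E) : A p -> (forall i, As i (ps i)) ->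
  recession_cone (clconv (A `|` \bigcup_(i in [set: 'I_k]) As i)) `<=`
  recession_cone (clconv (A `|` minkowski_sum As)).
Proof.
move=> Ap Aps; pose s := \sum_(i < k) ps i.
apply: (@recession_closure_perturb _ _ _ _ (zonotope (fun i => s - ps i)) p 1).
- exact: conv_hull_convex.
- by apply: sub_conv_hull; left.
- exact: ltr01.
- exact: zonotope_bounded.
apply: conv_hull_min.
  by apply: perturb_convex; [exact: conv_hull_convex | exact: zonotope_convex].
move=> x [Ax | [i _ Aix]].
  by exists 0; [exact: zonotope0 | rewrite scale1r addr0; apply: sub_conv_hull; left].
exists (s - ps i).
  exists (fun j => (j == i)%:R) => [j | ]; first by case: (j == i); rewrite ?lexx ?ler01.
  rewrite (bigD1 i) //= eqxx scale1r big1 ?addr0 // => j /negPf ->.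
  exact: scale0r.
apply: sub_conv_hull; right.
exists (fun j => if j == i then x else ps j); split.
  by move=> j; case: eqP => [-> |].
rewrite scale1r (bigD1 i) //= eqxx; congr (_ + _).
rewrite /s (bigD1 i) //= [ps i + _]addrC addrK.
by apply: eq_bigr => j /negPf ->.
Qed.

(* Conversely, for x in A the point x/k is, up to a multiple of p, a convex
   combination of x and p, while for x in A_1 + ... + A_k it is the average
   of points of the A_i. *)
Lemma recession_sum_sub_union k (A : set E) (As : 'I_k -> set E) (p : E) :
  (0 < k)%N -> A p ->
  recession_cone (clconv (A `|` minkowski_sum As)) `<=`
  recession_cone (clconv (A `|` \bigcup_(i in [set: 'I_k]) As i)).
Proof.
move=> k0 Ap.
have kR : (0 : R) < k%:R by rewrite ltr0n.
have ki0 : (0 : R) <= k%:R^-1 by rewrite invr_ge0 ltW.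
have ki1 : (k%:R : R)^-1 <= 1 by rewrite invf_le1 // ler1n.
apply: (@recession_closure_perturb _ _ _ _ (zonotope (fun _ : 'I_1 => p)) p
  k%:R^-1).
- exact: conv_hull_convex.
- by apply: sub_conv_hull; left.
- by rewrite invr_gt0.
- exact: zonotope_bounded.
apply: conv_hull_min.
  by apply: perturb_convex; [exact: conv_hull_convex | exact: zonotope_convex].
move=> x [Ax | [a [Aa ->]]].
  exists ((1 - k%:R^-1) *: p).
    exists (fun=> 1 - k%:R^-1); last by rewrite big_ord1.
    by move=> _; apply/andP; split; lra.
  by apply: convex_comb => //; [exact: conv_hull_convex | |];
    apply: sub_conv_hull; left.
exists 0; first exact: zonotope0.
rewrite addr0; apply: convex_mean => //; first exact: conv_hull_convex.
by move=> i; apply: sub_conv_hull; right; exists i.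
Qed.

End RecessionOfHulls.

Theorem lemma2 (R : realType) (E : tvsType R) (hE : hausdorff_space E)
    (k : nat) (hk : (2 <= k)%N) (A : set E) (As : 'I_k -> set E)
    (hA : A !=set0) (hAs : forall i, As i !=set0) :
  recession_cone (clconv (A `|` \bigcup_(i in [set: 'I_k]) As i)) =
  recession_cone (clconv (A `|` minkowski_sum As)).
Proof.
have [p Ap] := hA.
have [ps Aps] := choice hAs.
apply/seteqP; split.
- exact: recession_union_sub_sum Ap Aps.
- by apply: recession_sum_sub_union Ap; apply: leq_trans hk.
Qed.
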